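(* Let $A$ be a complete MV-algebra (its natural-order lattice is complete) and let $\{d_i\}_{i\in\Omega}$ be any family of $(\odot,\vee)$-derivations on $A$. Then (1) the map $\bigvee_{i\in\Omega}d_i$, defined by $(\bigvee_i d_i)(x)=\bigvee_i d_i(x)$, is a $(\odot,\vee)$-derivation on $A$; and (2) $\operatorname{Der}(A)$, ordered pointwise, is a complete lattice with bottom $\mathbf{0}_A$ and top $\mathrm{Id}_A$.
   Context: An MV-algebra is an algebra $(A,\oplus,{}^*,0)$ of type $(2,1,0)$ satisfying: $x\oplus(y\oplus z)=(x\oplus y)\oplus z$, $x\oplus y=y\oplus x$, $x\oplus 0=x$, $x^{**}=x$, $x\oplus 0^*=0^*$, $(x^*\oplus y)^*\oplus y=(y^*\oplus x)^*\oplus x$. Put $1=0^*$ and $x\odot y=(x^*\oplus y^* )^*$. The natural order is $x\le y$ iff $x^*\oplus y=1$, with lattice operations $x\vee y=(x\odot y^* )\oplus y$, $x\wedge y=x\odot(x^*\oplus y)$. A $(\odot,\vee)$-derivation on $A$ is a map $d:A\to A$ with $d(x\odot y)=(d(x)\odot y)\vee(x\odot d(y))$ for all $x,y\in A$; $\operatorname{Der}(A)$ is the set of these, ordered by $d\preceq d'$ iff $d(x)\le d'(x)$ for all $x$. $\mathbf{0}_A$ is the constant zero map. *)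

Record MVAlgebra := {
  mv_car :> Type;
  mv_oplus : mv_car -> mv_car -> mv_car;
  mv_star : mv_car -> mv_car;
  mv_zero : mv_car;
  mv_assoc : forall x y z, mv_oplus x (mv_oplus y z) = mv_oplus (mv_oplus x y) z;
  mv_comm : forall x y, mv_oplus x y = mv_oplus y x;
  mv_zero_r : forall x, mv_oplus x mv_zero = x;
  mv_starK : forall x, mv_star (mv_star x) = x;
  mv_one_abs : forall x, mv_oplus x (mv_star mv_zero) = mv_star mv_zero;
  mv_luk : forall x y,
    mv_oplus (mv_star (mv_oplus (mv_star x) y)) y =
    mv_oplus (mv_star (mv_oplus (mv_star y) x)) x
}.

Section MVOps.
Variable A : MVAlgebra.

Definition mv_one : A := mv_star A (mv_zero A).
Definition mv_odot (x y : A) : A :=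
  mv_star A (mv_oplus A (mv_star A x) (mv_star A y)).
Definition mv_le (x y : A) : Prop := mv_oplus A (mv_star A x) y = mv_one.
Definition mv_join (x y : A) : A := mv_oplus A (mv_odot x (mv_star A y)) y.
Definition mv_meet (x y : A) : A := mv_odot x (mv_oplus A (mv_star A x) y).

Definition mv_is_lub (P : A -> Prop) (s : A) : Prop :=
  (forall y, P y -> mv_le y s) /\
  (forall u, (forall y, P y -> mv_le y u) -> mv_le s u).

Definition mv_complete : Prop := forall P : A -> Prop, exists s, mv_is_lub P s.

Definition mv_derivation (d : A -> A) : Prop :=
  forall x y, d (mv_odot x y) = mv_join (mv_odot (d x) y) (mv_odot x (d y)).

Definition der_le (d d' : A -> A) : Prop := forall x, mv_le (d x) (d' x).

End MVOps.

Definition complete_lattice_on {T : Type} (X : T -> Prop) (le : T -> T -> Prop)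
  : Prop :=
  (forall a, X a -> le a a) /\
  (forall a b, X a -> X b -> le a b -> le b a -> a = b) /\
  (forall a b c, X a -> X b -> X c -> le a b -> le b c -> le a c) /\
  (forall S : T -> Prop, (forall a, S a -> X a) ->
     exists s, X s /\ (forall a, S a -> le a s) /\
               (forall u, X u -> (forall a, S a -> le a u) -> le s u)) /\
  (forall S : T -> Prop, (forall a, S a -> X a) ->
     exists s, X s /\ (forall a, S a -> le s a) /\
               (forall u, X u -> (forall a, S a -> le u a) -> le u s)).

From Stdlib Require Import ClassicalEpsilon FunctionalExtensionality.

(* Below [x'] is the complement [mv_star x], [+] is [oplus], [*] is [odot].
   1. The natural order of an MV-algebra is a partial order in which
      [x <= y] iff [y = x + a] for some [a]; [+], [*] are monotone,
      complement is antitone, [x * _] is residuated by [x' + _], and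
      [mv_join] is the binary supremum.
   2. Every (odot,vee)-derivation fixes 0 and is decreasing: [d x <= x].
      Hence [0] and [Id] are the least and greatest derivations.
   3. If every [D x] is the supremum of the [d_i x], then [D] is again a
      derivation: both sides of the Leibniz rule at [x * y] are shown to be
      the supremum of the [d_i (x * y)], using residuation to push the
      supremum through [odot].
   4. In a complete MV-algebra, choice yields a pointwise supremum of any set
      of derivations, which by 3 is its supremum in [Der A].
   5. A partial order in which every subset has a supremum is a complete
      lattice (the infimum is the supremum of the lower bounds); applied to
      [Der A] this gives the theorem. *)

(* A partial order in which every subset of the carrier [X] has a supremum
   in [X] is a complete lattice: infima are suprema of lower bounds. *)
Lemma complete_lattice_of_sups {T : Type} (X : T -> Prop) (le : T -> T -> Prop) :
  (forall a, X a -> le a a) ->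
  (forall a b, X a -> X b -> le a b -> le b a -> a = b) ->
  (forall a b c, X a -> X b -> X c -> le a b -> le b c -> le a c) ->
  (forall S : T -> Prop, (forall a, S a -> X a) ->
     exists s, X s /\ (forall a, S a -> le a s) /\
               (forall u, X u -> (forall a, S a -> le a u) -> le s u)) ->
  complete_lattice_on X le.
Proof.
  intros Hrefl Hanti Htrans Hsup.
  do 4 (split; [assumption|]).
  intros S HS.
  set (Lower := fun d => X d /\ forall a, S a -> le d a).
  destruct (Hsup Lower (fun d Hd => proj1 Hd)) as [s [Xs [s_upper s_least]]].
  exists s. split; [exact Xs | split].
  - intros a Sa. apply s_least; [now apply HS|]. intros b [_ Hb]. auto.
  - intros u Xu Hu. apply s_upper. now split.
Qed.

Section MVOrder.
Variable A : MVAlgebra.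
Local Notation "x +' y" := (mv_oplus A x y) (at level 50, left associativity).
Local Notation st := (mv_star A).
Local Notation o := (mv_zero A).
Local Notation le := (mv_le A).
Local Notation od := (mv_odot A).
Local Notation jn := (mv_join A).

Lemma add0l x : o +' x = x.
Proof. rewrite mv_comm; apply mv_zero_r. Qed.

Lemma add1l x : st o +' x = st o.
Proof. rewrite mv_comm; apply mv_one_abs. Qed.

(* [x' + x = 1]: the MV-axiom [mv_luk] with [y = 1]. *)
Lemma addNx x : st x +' x = st o.
Proof.
  pose proof (mv_luk A x (st o)) as H.
  rewrite mv_one_abs, mv_starK, add0l in H. now symmetry.
Qed.

Lemma odC x y : od x y = od y x.
Proof. unfold mv_odot. now rewrite mv_comm. Qed.

Lemma od0r x : od x o = o.
Proof. unfold mv_odot. rewrite mv_one_abs. apply mv_starK. Qed.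

Lemma odNr x : od x (st x) = o.
Proof. unfold mv_odot. rewrite mv_starK, addNx. apply mv_starK. Qed.

Lemma le_ex x y : le x y <-> exists a, y = x +' a.
Proof.
  unfold mv_le, mv_one. split.
  - intro H. pose proof (mv_luk A x y) as L. rewrite H, mv_starK, add0l in L.
    exists (st (st y +' x)). exact (eq_trans L (mv_comm _ _ _)).
  - intros [a ->]. now rewrite mv_assoc, addNx, add1l.
Qed.

Lemma le_refl x : le x x.
Proof. apply addNx. Qed.

Lemma le_trans x y z : le x y -> le y z -> le x z.
Proof.
  rewrite !le_ex. intros [a ->] [b ->]. exists (a +' b). now rewrite mv_assoc.
Qed.

Lemma le_antisym x y : le x y -> le y x -> x = y.
Proof.
  unfold mv_le, mv_one. intros H1 H2. pose proof (mv_luk A x y) as L.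
  rewrite H1, H2, mv_starK, !add0l in L. now symmetry.
Qed.

Lemma le0x x : le o x.
Proof. apply add1l. Qed.

Lemma le_add x y z : le x y -> le (x +' z) (y +' z).
Proof.
  rewrite !le_ex. intros [a ->]. exists a.
  rewrite <- !mv_assoc. f_equal. apply mv_comm.
Qed.

Lemma le_star x y : le x y -> le (st y) (st x).
Proof. unfold mv_le. rewrite mv_starK, mv_comm. auto. Qed.

Lemma le_odl x y z : le x y -> le (od x z) (od y z).
Proof. intro H. apply le_star, le_add, le_star, H. Qed.

Lemma le_odr x y z : le x y -> le (od z x) (od z y).
Proof. rewrite (odC z x), (odC z y). apply le_odl. Qed.

Lemma residuation x y z : le (od x y) z <-> le y (st x +' z).
Proof.
  unfold mv_le, mv_odot. rewrite mv_starK.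
  replace (st x +' st y +' z) with (st y +' (st x +' z)); [tauto|].
  rewrite (mv_comm _ (st x) (st y)). apply mv_assoc.
Qed.

Lemma joinC a b : jn a b = jn b a.
Proof. unfold mv_join, mv_odot. rewrite !mv_starK. apply mv_luk. Qed.

Lemma join_ubr a b : le b (jn a b).
Proof. apply le_ex. eexists. apply mv_comm. Qed.

Lemma join_ubl a b : le a (jn a b).
Proof. rewrite joinC. apply join_ubr. Qed.

Lemma join_idPr a b : le a b -> jn a b = b.
Proof.
  unfold mv_le, mv_one, mv_join, mv_odot. rewrite mv_starK. intro H.
  now rewrite H, mv_starK, add0l.
Qed.

Lemma join_least a b u : le a u -> le b u -> le (jn a b) u.
Proof.
  intros Ha Hb. apply le_trans with (jn u b).
  - apply le_add, le_odl, Ha.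
  - rewrite joinC, join_idPr; auto using le_refl.
Qed.

Lemma lub_unique P s t : mv_is_lub A P s -> mv_is_lub A P t -> s = t.
Proof.
  intros [Hs_ub Hs_least] [Ht_ub Ht_least].
  apply le_antisym; [apply Hs_least | apply Ht_least]; auto.
Qed.

Lemma lub_odl (P : A -> Prop) s y u :
  mv_is_lub A P s -> (forall z, P z -> le (od z y) u) -> le (od s y) u.
Proof.
  intros [_ s_least] Hu. rewrite odC. apply residuation, s_least.
  intros z Pz. apply residuation. rewrite odC. auto.
Qed.

End MVOrder.

Section Derivations.
Variable A : MVAlgebra.
Local Notation o := (mv_zero A).
Local Notation le := (mv_le A).
Local Notation od := (mv_odot A).

Lemma derivation_zero d : mv_derivation A d -> d o = o.
Proof.
  intro Hd. rewrite <- (od0r A o) at 1.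
  rewrite Hd, od0r, odC, od0r. apply join_idPr, le_refl.
Qed.

(* With [x'] the complement of [x]: [0 = d (x * x') >= d x * x'], so [d x * x' = 0], i.e. [d x <= x]. *)
Lemma derivation_le_id d : mv_derivation A d -> forall x, le (d x) x.
Proof.
  intros Hd x.
  assert (Hzero : od (d x) (mv_star A x) = o).
  { apply le_antisym; [|apply le0x].
    rewrite <- (derivation_zero d Hd), <- (odNr A x), Hd. apply join_ubl. }
  unfold mv_odot in Hzero. rewrite mv_starK in Hzero.
  unfold mv_le, mv_one. now rewrite <- Hzero, mv_starK.
Qed.

Lemma derivation_zero_map : mv_derivation A (fun _ => o).
Proof.
  intros x y. rewrite odC, !od0r. symmetry. apply join_idPr, le_refl.
Qed.

Lemma derivation_id : mv_derivation A (fun x => x).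
Proof. intros x y. symmetry. apply join_idPr, le_refl. Qed.

(* Part (1) of the theorem: a pointwise supremum of derivations is a
   derivation.  Both [D (x * y)] and [D x * y \/ x * D y] are the supremum
   of the values [d_i (x * y)]. *)
Lemma pointwise_sup_derivation (Omega : Type) (d : Omega -> A -> A)
  (Hd : forall i, mv_derivation A (d i)) (D : A -> A)
  (HD : forall x, mv_is_lub A (fun y => exists i, y = d i x) (D x)) :
  mv_derivation A D.
Proof.
  intros x y. apply (lub_unique A (fun z => exists i, z = d i (od x y))).
  { apply HD. }
  split.
  - intros z [i ->]. rewrite Hd. apply join_least.
    + apply le_trans with (od (D x) y); [|apply join_ubl].
      apply le_odl, (proj1 (HD x)). eauto.
    + apply le_trans with (od x (D y)); [|apply join_ubr].
      apply le_odr, (proj1 (HD y)). eauto.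
  - intros u Hu. apply join_least.
    + apply (lub_odl A _ _ y u (HD x)). intros z [i ->].
      apply le_trans with (d i (od x y)); [|apply Hu; eauto].
      rewrite Hd. apply join_ubl.
    + rewrite odC. apply (lub_odl A _ _ x u (HD y)). intros z [i ->].
      apply le_trans with (d i (od x y)); [|apply Hu; eauto].
      rewrite Hd, odC. apply join_ubr.
Qed.

Lemma derivation_sup_exists (hA : mv_complete A) (S : (A -> A) -> Prop) :
  (forall d, S d -> mv_derivation A d) ->
  exists s, mv_derivation A s /\ (forall d, S d -> der_le A d s) /\
    (forall u, mv_derivation A u -> (forall d, S d -> der_le A d u) ->
       der_le A s u).
Proof.
  intro HS.
  set (values := fun x y => exists d : {d | S d}, y = proj1_sig d x).
  set (D := fun x => proj1_sig (constructive_indefinite_description _ (hA (values x)))).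
  assert (HD : forall x, mv_is_lub A (values x) (D x)).
  { intro x. apply proj2_sig. }
  exists D. split; [|split].
  - apply (pointwise_sup_derivation {d | S d} (@proj1_sig _ _)); [|exact HD].
    intros [d Sd]. auto.
  - intros d Sd x. apply (proj1 (HD x)). now exists (exist _ d Sd).
  - intros u _ Hu x. apply (proj2 (HD x)). intros y [[d Sd] ->]. now apply Hu.
Qed.

End Derivations.

Theorem theorem5p9 (A : MVAlgebra) (hA : mv_complete A) :
  (forall (Omega : Type) (d : Omega -> A -> A),
     (forall i, mv_derivation A (d i)) ->
     forall D : A -> A,
       (forall x, mv_is_lub A (fun y => exists i, y = d i x) (D x)) ->
       mv_derivation A D) /\
  complete_lattice_on (mv_derivation A) (der_le A) /\
  (mv_derivation A (fun _ => mv_zero A) /\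
     forall d, mv_derivation A d -> der_le A (fun _ => mv_zero A) d) /\
  (mv_derivation A (fun x => x) /\
     forall d, mv_derivation A d -> der_le A d (fun x => x)).
Proof.
  split; [exact (pointwise_sup_derivation A)|].
  split; [|split; split].
  - apply complete_lattice_of_sups.
    + intros d _ x. apply le_refl.
    + intros d d' _ _ H1 H2. apply functional_extensionality. intro x.
      apply le_antisym; auto.
    + intros d1 d2 d3 _ _ _ H1 H2 x. eapply le_trans; eauto.
    + exact (derivation_sup_exists A hA).
  - exact (derivation_zero_map A).
  - intros d _ x. apply le0x.
  - exact (derivation_id A).
  - exact (derivation_le_id A).
Qed.
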